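(* Let $R=\mathbb{C}[z_1,\dots,z_n]$. Let $f_1,\dots,f_P,g\in R$ be homogeneous polynomials of degree $m$ such that $\{f_1,\dots,f_P,g\}$ is linearly independent over $\mathbb{C}$, and let $I^+=\langle f_1,\dots,f_P\rangle$ and $I^-=\langle g\rangle$. If $I^-_{m+1}\subseteq I^+_{m+1}$, then $n\le 3$ implies $P\ge n$. Moreover, for every $n\ge 4$ there exist such $f_1,\dots,f_P,g$ (linearly independent, homogeneous of a common degree $m$) with $I^-_{m+1}\subseteq I^+_{m+1}$ and $P<n$.
   Context: For a homogeneous ideal $I\subseteq R$, $I_{d}$ denotes its homogeneous component of degree $d$, i.e. the $\mathbb{C}$-vector space of homogeneous polynomials of degree $d$ lying in $I$. *)

From HB Require Import structures.
From mathcomp Require Import all_boot all_order all_algebra.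
From mathcomp Require Import Rstruct.
From mathcomp Require Import complex.
From mathcomp Require Import mpoly.

Set Implicit Arguments. Unset Strict Implicit. Unset Printing Implicit Defensive.
Import Order.TTheory GRing.Theory Num.Theory.
Local Open Scope ring_scope.

Definition CC : Type := complex Rdefinitions.R.

Definition in_ideal (n P : nat) (f : 'I_P -> {mpoly CC[n]}) (p : {mpoly CC[n]}) : Prop :=
  exists q : 'I_P -> {mpoly CC[n]}, p = \sum_(i < P) q i * f i.

Definition in_ideal_deg (n P : nat) (f : 'I_P -> {mpoly CC[n]}) (d : nat)
  (p : {mpoly CC[n]}) : Prop :=
  p \is d.-homog /\ in_ideal f p.

Definition lin_indep_fg (n P : nat) (f : 'I_P -> {mpoly CC[n]}) (g : {mpoly CC[n]}) : Prop :=
  forall (c : 'I_P -> CC) (c0 : CC),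
    \sum_(i < P) c i *: f i + c0 *: g = 0 -> (forall i, c i = 0) /\ c0 = 0.

Definition good_config (n m P : nat) (f : 'I_P -> {mpoly CC[n]}) (g : {mpoly CC[n]}) : Prop :=
  [/\ (forall i, f i \is m.-homog), g \is m.-homog, lin_indep_fg f g &
      (forall p, in_ideal_deg (fun _ : 'I_1 => g) m.+1 p -> in_ideal_deg f m.+1 p)].

(* Write l_e := \sum_i e_i X_i for a row vector e.  As f and g have degree m,
   the hypothesis says that X_i g = \sum_j l_(a_ij) f_j with linear coefficients,
   i.e. l_e g = \sum_j l_(e A_j) f_j for some matrices A_j.  Replacing g by
   g - \sum_j a_j f_j replaces A_j by A_j - a_j, so using left eigenvectors we
   may assume every A_j singular.  For P <= 1 this gives l_c g = 0 with c <> 0,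
   so g = 0.  For P = 2, take c A_0 = 0 = d A_1: then l_c g = l_(c A_1) f_1 and
   l_d g = l_(d A_0) f_0, and since a linear form is prime, g = l_(c A_1) h =
   l_(d A_0) k with f_1 = l_c h and f_0 = l_d k.  If l_(c A_1) and l_(d A_0) are
   independent then g = l_(c A_1) l_(d A_0) r, and cancelling linear factors in
   the syzygies puts every vector in the span of c and d, whence n <= 2.
   Otherwise g, f_0, f_1 are h times linear forms l, l_0, l_1 with
   X_i l in (l_0, l_1) for all i; evaluating at a common zero of l_0 and l_1
   puts l in the span of l_0 and l_1, contradicting linear independence.
   For n >= 4 the family f_0 = x_0^2, f_1 = x_1^2, f_j = x_0 x_j + x_1 x_(j+1)
   (2 <= j <= n - 2), g = x_0 x_1 has P = n - 1. *)

From HB Require Import structures.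
From mathcomp Require Import all_boot all_order all_algebra.
From mathcomp Require Import Rstruct complex mpoly.
From mathcomp Require Import ring zify.
Set Implicit Arguments. Unset Strict Implicit. Unset Printing Implicit Defensive.
Import GRing.Theory.
Local Open Scope ring_scope.

Lemma sum_ord2 (V : nmodType) (F : 'I_2 -> V) : \sum_(j < 2) F j = F 0 + F 1.
Proof. by rewrite big_ord_recr big_ord1; congr (F _ + F _); apply: val_inj. Qed.

Lemma submx1_adds_rV (F : fieldType) n (c d : 'rV[F]_n) :
  (1%:M <= c + d)%MS -> (n <= 2)%N.
Proof.
move/mxrankS; rewrite mxrank1 => /leq_trans; apply.
apply: leq_trans (mxrank_adds_leqif c d).1 _.
exact: leq_add (rank_leq_row c) (rank_leq_row d).
Qed.

Lemma exists_left_eigenvector (F : closedFieldType) n (A : 'M[F]_n.+1) :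
  exists a, exists2 c : 'rV_n.+1, c != 0 & c *m (A - a%:M) = 0.
Proof.
have /closed_rootP[a] : size (char_poly A) != 1%N by rewrite size_char_poly.
rewrite -eigenvalue_root_char => /eigenvalueP[c cA c_neq0]; exists a, c => //.
by rewrite mulmxBr mul_mx_scalar cA subrr.
Qed.

Lemma dhomogXU (R : nzRingType) n (i : 'I_n) : ('X_i : {mpoly R[n]}) \is 1.-homog.
Proof. by rewrite dhomogX /= mdeg1. Qed.

Lemma dhomogXUM (R : nzRingType) n (i j : 'I_n) :
  ('X_i * 'X_j : {mpoly R[n]}) \is 2.-homog.
Proof. exact: dhomogM (dhomogXU R i) (dhomogXU R j). Qed.

Lemma pihomogM_homog (R : nzRingType) n d e (q p : {mpoly R[n]}) :
  p \is e.-homog ->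
  pihomog mdeg (d + e) (q * p) = pihomog mdeg d q * p.
Proof.
move=> p_homog.
rewrite {1}(pihomog_partitionE (mf := mdeg) (leq_maxl (msize q) d.+1)) mulr_suml.
rewrite raddf_sum /= (bigD1 (Ordinal (leq_maxr (msize q) d.+1))) //=.
rewrite pihomog_dE ?dhomogM ?pihomogP // big1 ?addr0 // => k k_neq_d.
apply: pihomog_ne0 (dhomogM (pihomogP mdeg k q) p_homog).
by rewrite eqn_add2r; apply: contra k_neq_d => /eqP k_eq_d; apply/eqP/val_inj.
Qed.

Lemma dvd_sub_comp_mpoly (R : comNzRingType) n (l : {mpoly R[n]})
    (s : n.-tuple {mpoly R[n]}) :
  (forall i, exists r, 'X_i - ('X_i \mPo s) = l * r) ->
  forall p, exists r, p - (p \mPo s) = l * r.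
Proof.
move=> dvdX; pose D p := exists r, p - (p \mPo s) = l * r.
have D_add p q : D p -> D q -> D (p + q).
  move=> [r er] [r' er']; exists (r + r').
  by rewrite raddfD opprD addrACA er er' mulrDr.
have D_mul p q : D p -> D q -> D (p * q).
  move=> [r er] [r' er']; exists (r * q + (p \mPo s) * r').
  by rewrite rmorphM /= mulrDr mulrA -er mulrCA -er'; ring.
have D_scale a p : D p -> D (a *: p).
  by move=> [r er]; exists (a *: r); rewrite linearZ -scalerBr er scalerAr.
have D1 : D 1 by exists 0; rewrite rmorph1 subrr mulr0.
elim/mpolyind => [|a m p _ _ Dp]; first by exists 0; rewrite raddf0 subrr mulr0.
apply: D_add Dp; apply: D_scale; rewrite mpolyXE_id.
apply: (big_ind D D1 D_mul) => i _.
by elim: (m i) => [|k Dk]; rewrite ?expr0 // exprS; apply: D_mul.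
Qed.

Definition indep2 (R : nzRingType) (V : lmodType R) (u v : V) :=
  forall x y : R, x *: u + y *: v = 0 -> x = 0 /\ y = 0.

Section Independence.
Variables (R : nzRingType) (V : lmodType R).
Implicit Types u v : V.

Lemma indep2_sym u v : indep2 u v -> indep2 v u.
Proof. by move=> uv x y; rewrite addrC => /uv[]. Qed.

Lemma indep2_neq0 u v : indep2 u v -> u != 0.
Proof.
move=> uv; apply/eqP => u0; have [] := uv 1 0; last by move/eqP; rewrite oner_eq0.
by rewrite u0 scaler0 scale0r addr0.
Qed.

Lemma indep2_neq0r u v : indep2 u v -> v != 0.
Proof. by move/indep2_sym/indep2_neq0. Qed.

End Independence.

Lemma indep2_rV (F : fieldType) n (c c' : 'rV[F]_n) :
  c != 0 -> ~~ (c' <= c)%MS -> indep2 c c'.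
Proof.
move=> c_neq0 c'_notin x y xy0.
have [y0|y_neq0] := eqVneq y 0.
  move: xy0; rewrite y0 scale0r addr0 => /eqP.
  by rewrite scaler_eq0 (negbTE c_neq0) orbF => /eqP.
case/negP: c'_notin; apply/sub_rVP; exists (- (x / y)).
apply: (scalerI y_neq0); rewrite scalerA mulrN mulrCA divff // mulr1 scaleNr.
by apply/eqP; rewrite -addr_eq0 addrC xy0.
Qed.

Section LinearForms.
Variables (F : fieldType) (n : nat).
Local Notation MP := {mpoly F[n]}.
Implicit Types (c d e : 'rV[F]_n) (p q : MP).

Definition linform c : MP := \sum_i c 0 i *: 'X_i.

Fact linform_is_linear : linear linform.
Proof.
move=> a c d; rewrite /linform scaler_sumr -big_split; apply: eq_bigr => i _.
by rewrite !mxE scalerDl scalerA.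
Qed.

HB.instance Definition _ :=
  GRing.isLinear.Build F 'rV[F]_n MP _ linform linform_is_linear.

Lemma linform_delta i : linform (delta_mx 0 i) = 'X_i.
Proof.
rewrite /linform (bigD1 i) //= big1 ?addr0 ?mxE ?eqxx ?scale1r // => j /negbTE.
by rewrite mxE eq_sym => ->; rewrite scale0r.
Qed.

Lemma meval_linform v c : (linform c).@[v] = \sum_i c 0 i * v i.
Proof.
by rewrite /linform raddf_sum; apply: eq_bigr => i _ /=; rewrite mevalZ mevalXU.
Qed.

Lemma linform_inj : injective linform.
Proof.
apply: raddf_inj => c c0; apply/rowP => i.
have := congr1 (meval (fun k => (k == i)%:R)) c0.
rewrite meval_linform meval0 (bigD1 i) //= big1 ?eqxx ?mulr1 ?addr0 ?mxE // => j.
by move/negbTE ->; rewrite mulr0.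
Qed.

Lemma linform_eq0 c : (linform c == 0) = (c == 0).
Proof. exact: (raddf_eq0 _ linform_inj). Qed.

Lemma linform_homog c : linform c \is 1.-homog.
Proof. by apply: rpred_sum => i _; rewrite rpredZ ?dhomogXU. Qed.

Lemma linform_mulmx c (M : 'M_n) :
  linform (c *m M) = \sum_i c 0 i *: linform (row i M).
Proof.
by rewrite mulmx_sum_row linear_sum; apply: eq_bigr => i _; rewrite linearZ.
Qed.

Lemma dhomog1_linformE p : p \is 1.-homog -> linform (\row_i p@_U_(i)) = p.
Proof.
move=> p1; apply/mpolyP => m; rewrite raddf_sum /=.
have [/mdeg1P[i /eqP ->]|m_neq1] := boolP (mdeg m == 1%N).
  rewrite (bigD1 i) //= big1 => [|j /negbTE ji]; last first.
    by rewrite mcoeffZ mcoeffXU ji mulr0.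
  by rewrite mcoeffZ mcoeffXU eqxx mulr1 mxE addr0.
rewrite (dhomog_nemf_coeff p1 m_neq1) big1 // => j _.
rewrite mcoeffZ mcoeffX; case: eqP => [Ujm|]; last by rewrite mulr0.
by move: m_neq1; rewrite -Ujm mdeg1.
Qed.

Lemma msize_linform c : c != 0 -> msize (linform c) = 2%N.
Proof.
rewrite -linform_eq0 => l_neq0.
have := dhomog_uniq l_neq0 (linform_homog c) (dhomog_msize (linform_homog c)).
by case: (mmeasure _ (linform c)) => [|k] //= <-.
Qed.

Lemma linform_dvd_linform c c' r : c != 0 -> linform c' = linform c * r ->
  exists t, c' = t *: c.
Proof.
move=> c_neq0 l_eq; exists r@_0; apply: linform_inj.
have [r0|r_neq0] := eqVneq r 0.
  by rewrite l_eq r0 mulr0 mcoeff0 scale0r linear0.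
have c'_neq0 : c' != 0 by rewrite -linform_eq0 l_eq mulf_neq0 ?linform_eq0.
have := congr1 (fun p => msize p) l_eq.
rewrite msizeM ?linform_eq0 // !msize_linform // add2n => -[r1].
by rewrite linearZ l_eq [r in LHS](msize1_polyC (eq_leq (esym r1))) mulrC mul_mpolyC.
Qed.

Lemma linform_dvd c c' p q : indep2 c c' -> linform c * q = linform c' * p ->
  exists r, p = linform c * r.
Proof.
move=> cc' eq_cc'; have /rV0Pn[j cj_neq0] := indep2_neq0 cc'.
(* [s] kills [linform c] and moves each variable by a multiple of it, so that
   [p - (p \mPo s)] is a multiple of [linform c] for every [p]. *)
pose s := [tuple 'X_k - ((k == j)%:R / c 0 j) *: linform c | k < n].
have comp_X k : 'X_k \mPo s = 'X_k - ((k == j)%:R / c 0 j) *: linform c.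
  by rewrite comp_mpolyXU -tnth_nth tnth_mktuple.
have comp_linform e : linform e \mPo s = linform (e - (e 0 j / c 0 j) *: c).
  have coef_j : \sum_k e 0 k * ((k == j)%:R / c 0 j) = e 0 j / c 0 j.
    rewrite (bigD1 j) //= eqxx mul1r big1 ?addr0 // => k /negbTE ->.
    by rewrite mul0r mulr0.
  rewrite linearB linearZ /= -coef_j scaler_suml [linform e]/linform -sumrB.
  rewrite raddf_sum.
  by apply: eq_bigr => k _ /=; rewrite linearZ /= comp_X scalerBr scalerA.
have c_killed : linform c \mPo s = 0.
  by rewrite comp_linform divff // scale1r subrr linear0.
have c'_kept : linform c' \mPo s != 0.
  rewrite comp_linform linform_eq0 subr_eq0; apply/eqP => c'E.
  have /cc'[_ /eqP] : - (c' 0 j / c 0 j) *: c + 1 *: c' = 0.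
    by rewrite scale1r scaleNr -c'E addNr.
  by rewrite oner_eq0.
have p_killed : p \mPo s = 0.
  have := congr1 (comp_mpoly s) eq_cc'; rewrite !rmorphM /= c_killed mul0r.
  by move=> /esym/eqP; rewrite mulf_eq0 (negbTE c'_kept) => /eqP.
have X_dvd k : exists r, 'X_k - ('X_k \mPo s) = linform c * r.
  exists ((k == j)%:R / c 0 j)%:MP.
  by rewrite comp_X opprB addrC subrK [RHS]mulrC mul_mpolyC.
have [r pE] := dvd_sub_comp_mpoly X_dvd p.
by exists r; rewrite -pE p_killed subr0.
Qed.

Lemma linform_mul_dvd c b L s : indep2 L c ->
  linform c * linform b = linform L * s -> exists t, b = t *: L.
Proof.
move=> Lc eq_cb; have [r bE] := linform_dvd Lc (esym eq_cb).
exact: linform_dvd_linform (indep2_neq0 Lc) bE.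
Qed.

Lemma linform_cofactor c L (G H : MP) : c != 0 -> indep2 G H ->
  linform c * G = linform L * H ->
  indep2 c L /\ exists2 h, H = linform c * h & G = linform L * h.
Proof.
move=> c_neq0 GH eqGH; have lc_neq0 : linform c != 0 by rewrite linform_eq0.
have cL : indep2 c L.
  apply: indep2_rV c_neq0 _; apply/sub_rVP => -[t Lt].
  have /GH[/eqP] : 1 *: G + (- t) *: H = 0.
    apply: (mulfI lc_neq0); rewrite mulr0 scale1r scaleNr mulrBr -scalerAr eqGH Lt.
    by rewrite linearZ -scalerAl subrr.
  by rewrite oner_eq0.
split=> //; have [h Hh] := linform_dvd cL eqGH; exists h => //.
by apply: (mulfI lc_neq0); rewrite eqGH Hh mulrCA.
Qed.

Lemma linform_ideal_submx w0 w1 w2 :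
  (forall i, exists p q, 'X_i * linform w0 = p * linform w1 + q * linform w2) ->
  (w0 <= w1 + w2)%MS.
Proof.
move=> X_ideal; apply: contraT; rewrite submxE => /rV0Pn[j w0v_neq0].
(* A common zero of [linform w1] and [linform w2] where [linform w0] is not 0. *)
pose v i := cokermx (w1 + w2)%MS i j.
have ev e : (linform e).@[v] = (e *m cokermx (w1 + w2)%MS) 0 j.
  by rewrite meval_linform !mxE.
have w1v : (linform w1).@[v] = 0.
  by rewrite ev (eqP (_ : w1 *m _ == 0)) ?mxE // -submxE addsmxSl.
have w2v : (linform w2).@[v] = 0.
  by rewrite ev (eqP (_ : w2 *m _ == 0)) ?mxE // -submxE addsmxSr.
have v0 i : v i = 0.
  have [p [q /(congr1 (meval v))]] := X_ideal i.
  rewrite rmorphD !rmorphM /= mevalXU w1v w2v !mulr0 addr0 ev => /eqP.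
  by rewrite mulf_eq0 (negbTE w0v_neq0) orbF => /eqP.
by move: w0v_neq0; rewrite -ev meval_linform big1 ?eqxx // => i _; rewrite v0 mulr0.
Qed.

Lemma linform_syzygy_coef c d L1 L2 e a b : indep2 L2 d -> indep2 L2 L1 ->
  linform e * (linform L1 * linform L2) =
    linform a * (linform d * linform L1) + linform b * (linform c * linform L2) ->
  exists t, a = t *: L2.
Proof.
move=> L2d L2L1 syz.
have L2_dvd : linform L2 * (linform e * linform L1 - linform b * linform c) =
    linform L1 * (linform d * linform a).
  transitivity (linform e * (linform L1 * linform L2)
                - linform b * (linform c * linform L2)); first by ring.
  by rewrite syz; ring.
have [r daE] := linform_dvd L2L1 L2_dvd.
exact: linform_mul_dvd L2d daE.
Qed.

Lemma linform_syzygy_submx c d L1 L2 r e a b :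
  r != 0 -> indep2 L1 c -> indep2 L2 d -> indep2 L1 L2 ->
  linform e * (linform L1 * linform L2 * r) =
    linform a * (linform d * linform L1 * r) +
    linform b * (linform c * linform L2 * r) ->
  (e <= d + c)%MS.
Proof.
move=> r_neq0 L1c L2d L1L2 syz_r.
have syz : linform e * (linform L1 * linform L2) =
    linform a * (linform d * linform L1) + linform b * (linform c * linform L2).
  by apply: (mulIf r_neq0); move: syz_r; rewrite mulrDl -!mulrA.
have [t aE] := linform_syzygy_coef L2d (indep2_sym L1L2) syz.
have [t' bE] : exists t', b = t' *: L1.
  apply: (linform_syzygy_coef (c := d) (e := e) (b := a) L1c L1L2).
  by rewrite [linform L2 * _]mulrC addrC.
have L_neq0 : linform L1 * linform L2 != 0.
  by rewrite mulf_neq0 // linform_eq0 ?(indep2_neq0 L1L2) ?(indep2_neq0r L1L2).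
suff -> : e = t *: d + t' *: c by apply: addmx_sub_adds; apply: scalemx_sub.
apply: linform_inj; apply: (mulIf L_neq0); rewrite syz aE bE !linearD !linearZ /=.
by rewrite -!mul_mpolyC; ring.
Qed.

End LinearForms.

Section IdealMembership.
Variables (n P : nat) (f : 'I_P -> {mpoly CC[n]}).
Local Notation MP := {mpoly CC[n]}.

Lemma in_ideal_gen r j : in_ideal f (r * f j).
Proof.
exists (fun i => if i == j then r else 0).
by rewrite (bigD1 j) //= eqxx big1 ?addr0 // => i /negbTE ->; rewrite mul0r.
Qed.

Lemma in_idealD p q : in_ideal f p -> in_ideal f q -> in_ideal f (p + q).
Proof.
move=> [a ->] [b ->]; exists (fun j => a j + b j).
by rewrite -big_split; apply: eq_bigr => j _; rewrite mulrDl.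
Qed.

Lemma in_idealZ a p : in_ideal f p -> in_ideal f (a *: p).
Proof.
move=> [b ->]; exists (fun j => a *: b j).
by rewrite scaler_sumr; apply: eq_bigr => j _; rewrite scalerAl.
Qed.

Lemma in_idealB p q : in_ideal f p -> in_ideal f q -> in_ideal f (p - q).
Proof. by move=> fp /(in_idealZ (-1)); rewrite scaleN1r; apply: in_idealD. Qed.

Lemma in_ideal_sum (I : finType) (F : I -> MP) :
  (forall i, in_ideal f (F i)) -> in_ideal f (\sum_i F i).
Proof.
move=> fF; apply: (big_ind (in_ideal f)) => // [|p q]; last exact: in_idealD.
by exists (fun _ => 0); rewrite big1 // => j _; rewrite mul0r.
Qed.

End IdealMembership.

Lemma in_ideal_homog_linform n P (f : 'I_P -> {mpoly CC[n]}) m p :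
  (forall j, f j \is m.-homog) -> p \is m.+1.-homog -> in_ideal f p ->
  exists a : 'I_P -> 'rV_n, p = \sum_j linform (a j) * f j.
Proof.
move=> f_homog p_homog [q pE].
exists (fun j => \row_k (pihomog mdeg 1 (q j))@_U_(k)).
rewrite -(pihomog_dE p_homog) pE raddf_sum /=; apply: eq_bigr => j _.
by rewrite -add1n pihomogM_homog // dhomog1_linformE // pihomogP.
Qed.

Lemma in_ideal_deg_principal n P (f : 'I_P -> {mpoly CC[n]}) m g :
  g \is m.-homog -> (forall i, in_ideal f ('X_i * g)) ->
  forall p, in_ideal_deg (fun _ : 'I_1 => g) m.+1 p -> in_ideal_deg f m.+1 p.
Proof.
move=> g_homog Xg_in p [p_homog p_in]; split=> //.
have [a ->] := in_ideal_homog_linform (fun _ => g_homog) p_homog p_in.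
rewrite big_ord1 /linform mulr_suml; apply: in_ideal_sum => i.
by rewrite -scalerAl; apply: in_idealZ.
Qed.

Section Configurations.
Variables (n P : nat) (f : 'I_P -> {mpoly CC[n]}).

Lemma lin_indep_fg_neq0 g : lin_indep_fg f g -> g != 0.
Proof.
move=> indep; apply/eqP => g0.
have rel : \sum_j (fun _ => 0 : CC) j *: f j + 1 *: g = 0.
  by rewrite g0 scaler0 addr0 big1 // => j _; rewrite scale0r.
by have [_ /eqP] := indep _ _ rel; rewrite oner_eq0.
Qed.

Lemma lin_indep_fg_subr g (a : 'I_P -> CC) :
  lin_indep_fg f g -> lin_indep_fg f (g - \sum_j a j *: f j).
Proof.
move=> indep c c0 rel.
have rel' : \sum_j (c j - c0 * a j) *: f j + c0 *: g = 0.
  rewrite -[RHS]rel scalerBr scaler_sumr.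
  under eq_bigr do rewrite scalerBl -scalerA.
  by rewrite sumrB addrAC addrA.
have [cE c0E] := indep _ _ rel'.
by split=> // j; move: (cE j); rewrite c0E mul0r subr0.
Qed.

Lemma good_config_syzygy m g : good_config m f g ->
  exists A : 'I_P -> 'M[CC]_n,
  forall e, linform e * g = \sum_j linform (e *m A j) * f j.
Proof.
case=> f_homog g_homog _ incl.
have Xg_lin i : exists a : 'I_P -> 'rV_n, 'X_i * g = \sum_j linform (a j) * f j.
  have Xg_homog : 'X_i * g \is m.+1.-homog.
    by rewrite -add1n dhomogM ?dhomogXU.
  have [_ Xg_in] := incl ('X_i * g) (conj Xg_homog (in_ideal_gen _ 'X_i ord0)).
  exact: in_ideal_homog_linform f_homog Xg_homog Xg_in.
have [a Xg] := fin_all_exists Xg_lin.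
exists (fun j => \matrix_(i, k) a i j 0 k) => e.
have rowA i j : row i (\matrix_(i, k) a i j 0 k) = a i j.
  by apply/rowP => k; rewrite !mxE.
transitivity (\sum_i e 0 i *: ('X_i * g)).
  by rewrite [linform e]/linform mulr_suml; apply: eq_bigr => i _; rewrite scalerAl.
under eq_bigr do rewrite Xg scaler_sumr.
rewrite exchange_big; apply: eq_bigr => j _ /=.
by rewrite linform_mulmx mulr_suml; apply: eq_bigr => i _; rewrite rowA scalerAl.
Qed.

Lemma syzygy_shift g (A : 'I_P -> 'M[CC]_n) (a : 'I_P -> CC) :
  (forall e, linform e * g = \sum_j linform (e *m A j) * f j) ->
  forall e, linform e * (g - \sum_j a j *: f j) =
    \sum_j linform (e *m (A j - (a j)%:M)) * f j.
Proof.
move=> syz e; rewrite mulrBr syz mulr_sumr -sumrB; apply: eq_bigr => j _.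
by rewrite mulmxBr mul_mx_scalar linearB linearZ /= mulrBl -scalerAl -scalerAr.
Qed.

End Configurations.

Section TwoGenerators.
Variables (n : nat) (f : 'I_2 -> {mpoly CC[n]}) (g : {mpoly CC[n]}).
Variable A : 'I_2 -> 'M[CC]_n.
Hypothesis indep : lin_indep_fg f g.
Hypothesis syz : forall e, linform e * g = \sum_j linform (e *m A j) * f j.

Lemma syzygy2 e :
  linform e * g = linform (e *m A 0) * f 0 + linform (e *m A 1) * f 1.
Proof. by rewrite syz sum_ord2. Qed.

Lemma lin_indep_fg2 x y z : x *: f 0 + y *: f 1 + z *: g = 0 ->
  [/\ x = 0, y = 0 & z = 0].
Proof.
move=> rel.
have rel' : \sum_j (if j == 0 then x else y) *: f j + z *: g = 0.
  by rewrite sum_ord2.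
have [xy0 z0] := indep rel'.
by split=> //; [apply: (xy0 0) | apply: (xy0 1)].
Qed.

Lemma indep2_g_f0 : indep2 g (f 0).
Proof.
by move=> x y rel; have [] := @lin_indep_fg2 y 0 x; rewrite // scale0r addr0 addrC.
Qed.

Lemma indep2_g_f1 : indep2 g (f 1).
Proof.
by move=> x y rel; have [] := @lin_indep_fg2 0 y x; rewrite // scale0r add0r addrC.
Qed.

Lemma syzygy_common_linear_factor w0 w1 w2 h :
  f 0 = linform w1 * h -> f 1 = linform w2 * h -> g = linform w0 * h -> False.
Proof.
move=> f0E f1E gE.
have h_neq0 : h != 0.
  by apply: contraNneq (lin_indep_fg_neq0 indep) => h0; rewrite gE h0 mulr0.
have /sub_addsmxP[[u1 u2] /= w0E] : (w0 <= w1 + w2)%MS.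
  apply: linform_ideal_submx => i.
  exists (linform (delta_mx 0 i *m A 0)), (linform (delta_mx 0 i *m A 1)).
  apply: (mulIf h_neq0); rewrite -mulrA -gE -linform_delta syzygy2 f0E f1E.
  by rewrite mulrDl -!mulrA.
have /lin_indep_fg2[_ _ /eqP] : u1 0 0 *: f 0 + u2 0 0 *: f 1 + (-1) *: g = 0.
  have {}w0E : w0 = u1 0 0 *: w1 + u2 0 0 *: w2.
    by rewrite w0E -!mul_scalar_mx -!mx11_scalar.
  rewrite gE w0E linearD !linearZ /=.
  by rewrite f0E f1E scaleN1r mulrDl -!scalerAl subrr.
by rewrite oppr_eq0 oner_eq0.
Qed.

Lemma syzygy_two_linear_factors c d L1 L2 r :
  indep2 L1 c -> indep2 L2 d -> indep2 L1 L2 ->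
  f 0 = linform d * linform L1 * r -> f 1 = linform c * linform L2 * r ->
  g = linform L1 * linform L2 * r -> (1%:M <= d + c)%MS.
Proof.
move=> L1c L2d L1L2 f0E f1E gE.
have r_neq0 : r != 0.
  by apply: contraNneq (lin_indep_fg_neq0 indep) => r0; rewrite gE r0 mulr0.
apply/row_subP => i.
apply: (linform_syzygy_submx (a := row i 1%:M *m A 0) (b := row i 1%:M *m A 1)
  r_neq0 L1c L2d L1L2).
by rewrite -gE -f0E -f1E syzygy2.
Qed.

Lemma singular_syzygy_rank (c d : 'rV_n) :
  c != 0 -> c *m A 0 = 0 -> d != 0 -> d *m A 1 = 0 -> (n <= 2)%N.
Proof.
move=> c_neq0 cA d_neq0 dA.
have [cL1 [h f1E gE]] : indep2 c (c *m A 1) /\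
    exists2 h, f 1 = linform c * h & g = linform (c *m A 1) * h.
  apply: linform_cofactor c_neq0 indep2_g_f1 _.
  by rewrite syzygy2 cA linear0 mul0r add0r.
have [dL2 [k f0E gE']] : indep2 d (d *m A 0) /\
    exists2 k, f 0 = linform d * k & g = linform (d *m A 0) * k.
  apply: linform_cofactor d_neq0 indep2_g_f0 _.
  by rewrite syzygy2 dA linear0 mul0r addr0.
set L1 := c *m A 1 in cL1 gE; set L2 := d *m A 0 in dL2 gE'.
have lL2_neq0 : linform L2 != 0 by rewrite linform_eq0 (indep2_neq0r dL2).
(* Either [g], [f 0], [f 1] share the cofactor [h], or [linform L1 * linform L2]
   divides [g]. *)
have [/sub_rVP[t L1E] | L1_notin] := boolP (L1 <= L2)%MS.
  have kE : k = t *: h.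
    by apply: (mulfI lL2_neq0); rewrite -gE' gE L1E linearZ -scalerAl scalerAr.
  exfalso; apply: (syzygy_common_linear_factor (w1 := t *: d) _ f1E gE).
  by rewrite f0E kE linearZ -scalerAl scalerAr.
have L2L1 := indep2_rV (indep2_neq0r dL2) L1_notin.
have [r hE] := linform_dvd L2L1 (etrans (esym gE') gE).
have kE : k = linform L1 * r.
  by apply: (mulfI lL2_neq0); rewrite -gE' gE hE mulrCA.
apply: (submx1_adds_rV (c := d) (d := c)).
apply: (syzygy_two_linear_factors (L1 := L1) (L2 := L2) (r := r)).
- exact: indep2_sym cL1.
- exact: indep2_sym dL2.
- exact: indep2_sym L2L1.
- by rewrite f0E kE mulrA.
- by rewrite f1E hE mulrA.
- by rewrite gE hE mulrA.
Qed.

End TwoGenerators.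

Lemma good_config0 n m (f : 'I_0 -> {mpoly CC[n]}) g :
  good_config m f g -> n = 0%N.
Proof.
case: n f g => // n f g cfg; have [_ _ indep _] := cfg.
have [A syz] := good_config_syzygy cfg.
have /eqP := syz (delta_mx 0 ord0); rewrite big_ord0 linform_delta mulf_eq0.
rewrite (negbTE (lin_indep_fg_neq0 indep)) orbF -linform_delta linform_eq0.
by move=> /eqP/matrixP/(_ 0 ord0); rewrite !mxE eqxx => /eqP; rewrite oner_eq0.
Qed.

Lemma good_config1 n m (f : 'I_1 -> {mpoly CC[n]}) g :
  good_config m f g -> n = 0%N.
Proof.
case: n f g => // n f g cfg; have [_ _ indep _] := cfg.
have [A syz] := good_config_syzygy cfg.
have [a [c c_neq0 cA]] := exists_left_eigenvector (A ord0).
have /lin_indep_fg_neq0 := lin_indep_fg_subr (a := fun _ => a) indep.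
have := syzygy_shift (fun _ => a) syz c.
rewrite !big_ord1 /= cA linear0 mul0r => /eqP.
by rewrite mulf_eq0 linform_eq0 (negbTE c_neq0) => /eqP->; rewrite eqxx.
Qed.

Lemma good_config2 n m (f : 'I_2 -> {mpoly CC[n]}) g :
  good_config m f g -> (n <= 2)%N.
Proof.
case: n f g => // n f g cfg; have [_ _ indep _] := cfg.
have [A syz] := good_config_syzygy cfg.
have [a [c c_neq0 cA]] := exists_left_eigenvector (A 0).
have [b [d d_neq0 dB]] := exists_left_eigenvector (A 1).
pose s (j : 'I_2) := if j == 0 then a else b.
apply: (singular_syzygy_rank (lin_indep_fg_subr (a := s) indep) (syzygy_shift s syz)
  c_neq0 _ d_neq0) => //.
Qed.

Section SharpExample.
Variable k : nat.
Local Notation N := k.+4.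
Local Notation MP := {mpoly CC[N]}.
Local Notation x i := ('X_(inord i) : MP).

Definition sharp_f (j : 'I_k.+3) : MP :=
  match (j : nat) with
  | 0 => x 0 * x 0
  | 1 => x 1 * x 1
  | _ => x 0 * x j + x 1 * x j.+1
  end.

Definition sharp_g : MP := x 0 * x 1.

Lemma sharp_f_homog j : sharp_f j \is 2.-homog.
Proof. by rewrite /sharp_f; case: (val j) => [|[|s]]; rewrite ?rpredD ?dhomogXUM. Qed.

Lemma sharp_f_inord j : (j < k.+3)%N -> sharp_f (inord j) =
  match j with
  | 0 => x 0 * x 0
  | 1 => x 1 * x 1
  | _ => x 0 * x j + x 1 * x j.+1
  end.
Proof. by move=> lt_j; rewrite /sharp_f inordK. Qed.

Lemma X_sharp_g_in t : (t < N)%N -> in_ideal sharp_f (x t * sharp_g).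
Proof.
case: t => [|[|t]] lt_t.
- have -> : x 0 * sharp_g = x 1 * sharp_f (inord 0).
    by rewrite sharp_f_inord // /sharp_g; ring.
  exact: in_ideal_gen.
- have -> : x 1 * sharp_g = x 0 * sharp_f (inord 1).
    by rewrite sharp_f_inord // /sharp_g; ring.
  exact: in_ideal_gen.
have [lt_t3 | ge_t3] := ltnP t.+2 k.+3.
  have -> : x t.+2 * sharp_g =
      x 1 * sharp_f (inord t.+2) - x t.+3 * sharp_f (inord 1).
    by rewrite !sharp_f_inord // /sharp_g; ring.
  by apply: in_idealB; apply: in_ideal_gen.
have -> : t = k.+1 by lia.
have -> : x k.+3 * sharp_g =
    x 0 * sharp_f (inord k.+2) - x k.+2 * sharp_f (inord 0).
  by rewrite !sharp_f_inord // /sharp_g; ring.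
by apply: in_idealB; apply: in_ideal_gen.
Qed.

Lemma meval_X_inord (U : nat -> CC) i : (i < N)%N -> (x i).@[fun t => U t] = U i.
Proof. by move=> lt_i; rewrite mevalXU inordK. Qed.

Lemma meval_sharp_f (U : nat -> CC) j : (sharp_f j).@[fun t => U t] =
  match (j : nat) with
  | 0 => U 0 * U 0
  | 1 => U 1 * U 1
  | _ => U 0 * U j + U 1 * U j.+1
  end.
Proof.
rewrite /sharp_f; case: j => [[|[|s]] lt_s] /=.
- by rewrite rmorphM /= meval_X_inord.
- by rewrite rmorphM /= meval_X_inord.
by rewrite rmorphD !rmorphM /= !meval_X_inord // ltnW.
Qed.

Lemma meval_sharp_comb (U : nat -> CC) (c : 'I_k.+3 -> CC) cg :
  (\sum_j c j *: sharp_f j + cg *: sharp_g).@[fun t => U t] =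
  c ord0 * (U 0 * U 0) + c (lift ord0 ord0) * (U 1 * U 1)
  + \sum_(s < k.+1) c (lift ord0 (lift ord0 s)) * (U 0 * U s.+2 + U 1 * U s.+3)
  + cg * (U 0 * U 1).
Proof.
rewrite rmorphD raddf_sum /= mevalZ /sharp_g rmorphM /= !meval_X_inord //; congr (_ + _).
rewrite 2!big_ord_recl addrA !mevalZ !meval_sharp_f /=.
by congr (_ + _); apply: eq_bigr => s _; rewrite mevalZ meval_sharp_f !lift0.
Qed.

Lemma sharp_lin_indep : lin_indep_fg sharp_f sharp_g.
Proof.
move=> c cg rel.
have EV U : c ord0 * (U 0 * U 0) + c (lift ord0 ord0) * (U 1 * U 1)
    + \sum_(s < k.+1) c (lift ord0 (lift ord0 s)) * (U 0 * U s.+2 + U 1 * U s.+3)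
    + cg * (U 0 * U 1) = 0.
  by rewrite -meval_sharp_comb rel meval0.
have c0 : c ord0 = 0.
  have := EV (fun i => (i == 0)%:R); rewrite big1 => [|s _] /=.
    by rewrite !(mulr0n, mulr1n, mulr0, mul0r, mulr1, addr0).
  by rewrite !(mulr0n, mulr1n, mulr0, mul0r, addr0).
have c1 : c (lift ord0 ord0) = 0.
  have := EV (fun i => (i == 1)%:R); rewrite big1 => [|s _] /=.
    by rewrite !(mulr0n, mulr1n, mulr0, mul0r, mulr1, add0r, addr0).
  by rewrite !(mulr0n, mulr1n, mulr0, mul0r, addr0).
have cg0 : cg = 0.
  have := EV (fun i => ((i == 0) || (i == 1))%:R); rewrite big1 => [|s _] /=.
    by rewrite c0 c1 !(mulr0n, mulr1n, mulr0, mul0r, mulr1, add0r, addr0).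
  by rewrite !(mulr0n, mulr1n, mulr0, mul0r, addr0).
have cs s0 : c (lift ord0 (lift ord0 s0)) = 0.
  have := EV (fun i => ((i == 0) || (i == s0.+2))%:R); rewrite (bigD1 s0) //= big1.
    by rewrite eqxx c0 !(mulr0n, mulr1n, mulr0, mul0r, mulr1, add0r, addr0).
  move=> s /negbTE s_neq; have s_neq' : (s == s0 :> nat) = false := s_neq.
  by rewrite !eqSS s_neq' !(mulr0n, mulr1n, mulr0, mul0r, addr0).
split=> // -[[|[|s]] lt_s].
- by rewrite -c0; congr c; apply: val_inj.
- by rewrite -c1; congr c; apply: val_inj.
- by rewrite -(cs (Ordinal (lt_s : (s < k.+1)%N))); congr c; apply: val_inj.
Qed.

Lemma sharp_config : good_config 2 sharp_f sharp_g.
Proof.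
split; [exact: sharp_f_homog | exact: dhomogXUM | exact: sharp_lin_indep |].
apply: in_ideal_deg_principal (dhomogXUM _ _ _) _ => i.
by have := X_sharp_g_in (ltn_ord i); rewrite inord_val.
Qed.

End SharpExample.

Theorem theorem2 :
  (forall (n m P : nat) (f : 'I_P -> {mpoly CC[n]}) (g : {mpoly CC[n]}),
      (n <= 3)%N -> good_config m f g -> (n <= P)%N) /\
  (forall n : nat, (4 <= n)%N ->
      exists (m P : nat) (f : 'I_P -> {mpoly CC[n]}) (g : {mpoly CC[n]}),
        good_config m f g /\ (P < n)%N).
Proof.
split=> [n m P f g le_n3 cfg | n le4n].
  case: P f cfg => [|[|[|P]]] f cfg.
  - by rewrite (good_config0 cfg).
  - by rewrite (good_config1 cfg).
  - exact: good_config2 cfg.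
  - exact: leq_trans le_n3 _.
have [k ->] : exists k, n = k.+4 by exists (n - 4)%N; rewrite -addn4 subnK.
by exists 2%N, k.+3, (@sharp_f k), (sharp_g k); split; first exact: sharp_config.
Qed.
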